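(* Let $G=(V,E)$ be a finite Eulerian graph (every vertex has even degree). For $A\subseteq E$ let $\varepsilon(A)$ denote the number of Eulerian orientations of $(V,A)$ and $h(A)$ the number of half graphs of $(V,A)$. Let $G\times K_2$ be the bipartite double cover of $G$. Then $$\varepsilon(G\times K_2)=h(G\times K_2)=\sum_{A\subseteq E}\varepsilon(A)\,h(E\setminus A).$$
   Context: An Eulerian orientation of a graph is an orientation in which every vertex has in-degree equal to out-degree. A half graph of a graph $F$ is a subset $S$ of its edges such that every vertex $v$ is incident to exactly $d_F(v)/2$ edges of $S$. The bipartite double cover $G\times K_2$ has vertex set $V\times\{0,1\}$, and for every edge $uv\in E$ it contains the two edges $(u,0)(v,1)$ and $(u,1)(v,0)$. *)

From mathcomp Require Import all_boot.
Set Implicit Arguments. Unset Strict Implicit. Unset Printing Implicit Defensive.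

Section Graphs.
Variables (V E : finType) (ends : E -> V * V).

Definition loopless := forall e : E, (ends e).1 != (ends e).2.

Definition deg (A : {set E}) (v : V) : nat :=
  #|[set e in A | ((ends e).1 == v) || ((ends e).2 == v)]|.

Definition eulerian_graph : Prop := forall v : V, ~~ odd (deg setT v).

(* An orientation of (V, A) is encoded by a bool per edge of A (true = reversed);
   entries outside A are fixed to false so orientations are counted exactly once. *)
Definition tail (o : {ffun E -> bool}) (e : E) : V :=
  if o e then (ends e).2 else (ends e).1.
Definition head (o : {ffun E -> bool}) (e : E) : V :=
  if o e then (ends e).1 else (ends e).2.

Definition eulerian_orientation (A : {set E}) (o : {ffun E -> bool}) : bool :=
  [forall e, (e \notin A) ==> ~~ o e] &&
  [forall v, #|[set e in A | head o e == v]| == #|[set e in A | tail o e == v]|].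

Definition n_eul_orient (A : {set E}) : nat :=
  #|[set o : {ffun E -> bool} | eulerian_orientation A o]|.

Definition half_graph (A S : {set E}) : bool :=
  (S \subset A) && [forall v, (deg S v).*2 == deg A v].

Definition n_half (A : {set E}) : nat := #|[set S : {set E} | half_graph A S]|.

End Graphs.

Definition dc_ends (V E : finType) (ends : E -> V * V) (x : E * bool) :
  (V * bool) * (V * bool) :=
  (((ends x.1).1, x.2), ((ends x.1).2, ~~ x.2)).

From Pilot Require Import Defs.
From mathcomp Require Import all_boot zify.
Set Implicit Arguments. Unset Strict Implicit. Unset Printing Implicit Defensive.

(* G x K_2 is bipartite, with sides V x {false} and V x {true}.  In a bipartite
   graph, sending an orientation to the set S of edges leaving the false side is
   a bijection onto the edge subsets, and at a vertex of the true (false) side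
   the degree of S is its in-degree (out-degree); so S is a half graph exactly
   when the orientation is Eulerian.  For the second equality, record for each
   edge e of G which of its two lifts lie in S: the edges A with exactly one
   lift, oriented according to which lift it is, and the edges T with both.
   At (w, c) the degree of S is deg_T(w) plus the in- or out-degree of w in the
   orientation of A, depending on c, so S is a half graph of G x K_2 iff the
   orientation of A is Eulerian and T is a half graph of (V, E \ A). *)

Lemma card_in_bij (T1 T2 : finType) (P : {set T1}) (Q : {set T2}) f g :
  {in P, forall x, f x \in Q} -> {in Q, forall y, g y \in P} ->
  {in P, cancel f g} -> {in Q, cancel g f} -> #|P| = #|Q|.
Proof.
move=> fPQ gQP fK gK; rewrite -(card_in_imset (can_in_inj fK)).
congr #|pred_of_set _|; apply/setP=> y; apply/imsetP/idP=> [[x xP ->] | yQ].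
  exact: fPQ.
by exists (g y); rewrite ?gK ?gQP.
Qed.

Lemma sum_mul_card (I T1 T2 : finType) (X : I -> {set T1}) (Z : I -> {set T2}) :
  \sum_i #|X i| * #|Z i| =
  #|[set t : I * (T1 * T2) | (t.2.1 \in X t.1) && (t.2.2 \in Z t.1)]|.
Proof.
under eq_bigr => i _ do rewrite -cardsX -sum1_card big_mkcond /=.
rewrite pair_big -sum1_card [RHS]big_mkcond.
by apply: eq_bigr => -[i [x z]] _; rewrite !inE.
Qed.

Section Degrees.
Variables (V E : finType) (ends : E -> V * V).

Lemma deg_setT_setC (A : {set E}) w : deg ends setT w = deg ends A w + deg ends (~: A) w.
Proof.
rewrite /deg -(cardsID A); congr (_ + _); apply: eq_card => e; rewrite !inE //.
by rewrite andbC.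
Qed.

Hypothesis ends_loopless : loopless ends.

Lemma deg_head_tail (o : {ffun E -> bool}) (A : {set E}) w :
  deg ends A w = #|[set e in A | Defs.head ends o e == w]| +
                 #|[set e in A | Defs.tail ends o e == w]|.
Proof.
rewrite /deg -(cardsID [set e | Defs.head ends o e == w]).
congr (_ + _); apply: eq_card => e; rewrite !inE /Defs.head /Defs.tail;
  have := ends_loopless e; case: (ends e) => u v /= /negbTE uv;
  case: (o e) (e \in A) => -[] //=; case: (u =P w) => [?|/eqP/negbTE uw]; subst;
  by rewrite ?eqxx ?uw ?(eq_sym v) ?uv //= ?andbb ?andbF ?andNb.
Qed.
End Degrees.

Section Bipartite.
Variables (V E : finType) (ends : E -> V * V) (side : V -> bool).
Hypothesis ends_bipartite : forall e, side (ends e).1 != side (ends e).2.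

Lemma bipartite_loopless : loopless ends.
Proof. by move=> e; apply: contra_neq (ends_bipartite e) => ->. Qed.

Definition half_of_orient (o : {ffun E -> bool}) : {set E} :=
  [set e | ~~ side (Defs.tail ends o e)].

Definition orient_of_half (S : {set E}) : {ffun E -> bool} :=
  [ffun e => (e \in S) == side (ends e).1].

Lemma half_of_orientK : cancel half_of_orient orient_of_half.
Proof.
move=> o; apply/ffunP => e; rewrite ffunE inE /Defs.tail.
have := ends_bipartite e; case: (o e) => /=;
  by case: (side (ends e).1) (side (ends e).2) => -[].
Qed.

Lemma orient_of_halfK : cancel orient_of_half half_of_orient.
Proof.
move=> S; apply/setP => e; rewrite inE /Defs.tail ffunE.
have := ends_bipartite e; case: (ends e) => u v /=.
by case: (e \in S); case su: (side u); case sv: (side v); rewrite /= ?su ?sv.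
Qed.

Lemma deg_half_of_orient o w :
  deg ends (half_of_orient o) w =
  if side w then #|[set e in setT | Defs.head ends o e == w]|
  else #|[set e in setT | Defs.tail ends o e == w]|.
Proof.
case: ifP => sw; apply: eq_card => e; rewrite !inE /Defs.head /Defs.tail;
  have := ends_bipartite e; case: (ends e) => u v /=;
  case: (o e); case: (u =P w) => [?|/eqP/negbTE uw]; case: (v =P w) => [?|/eqP/negbTE vw];
  subst; rewrite ?sw ?eqxx ?uw ?vw //= ?andbT ?andbF;
  by case: (side _).
Qed.

Lemma half_graph_half_of_orient o :
  half_graph ends setT (half_of_orient o) = eulerian_orientation ends setT o.
Proof.
rewrite /half_graph /eulerian_orientation subsetT.
have -> : [forall e, (e \notin setT) ==> ~~ o e] by apply/forallP => e; rewrite inE.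
apply: eq_forallb => w; rewrite deg_half_of_orient (deg_head_tail bipartite_loopless o).
set h := #|_|; set t := #|_|; case: (side w); apply/eqP/eqP; lia.
Qed.

Lemma n_eul_orient_bipartite : n_eul_orient ends setT = n_half ends setT.
Proof.
apply: (card_in_bij (f := half_of_orient) (g := orient_of_half)) => [o|S|o _|S _].
- by rewrite !inE half_graph_half_of_orient.
- by rewrite !inE -half_graph_half_of_orient orient_of_halfK.
- exact: half_of_orientK.
- exact: orient_of_halfK.
Qed.
End Bipartite.

Lemma dc_bipartite (V E : finType) (ends : E -> V * V) x :
  ((dc_ends ends x).1).2 != ((dc_ends ends x).2).2.
Proof. by case: x => e []. Qed.

Section DoubleCover.
Variables (V E : finType) (ends : E -> V * V).
Hypothesis ends_loopless : loopless ends.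

(* For e incident to w, the lift of e incident to (w, c). *)
Definition dc_lift (w : V) (c : bool) (e : E) : E * bool :=
  (e, ((ends e).1 == w) == c).

Lemma dc_incident x w c :
  ((dc_ends ends x).1 == (w, c)) || ((dc_ends ends x).2 == (w, c)) =
  (((ends x.1).1 == w) || ((ends x.1).2 == w)) && (x == dc_lift w c x.1).
Proof.
case: x => e b; rewrite /dc_ends /dc_lift /= !xpair_eqE /=.
have := ends_loopless e; case: (ends e) => u v /= /negbTE uv.
case: (u =P w) => [?|/eqP/negbTE uw]; case: (v =P w) => [?|/eqP/negbTE vw];
  subst; first by rewrite eqxx in uv.
all: by rewrite ?eqxx ?uw ?vw ?uv /=; case: b c => -[].
Qed.

Lemma deg_dc S w c :
  deg (dc_ends ends) S (w, c) = deg ends [set e | dc_lift w c e \in S] w.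
Proof.
apply: (card_in_bij (f := fst) (g := dc_lift w c)) => [x|e|x|e _] //;
  rewrite !inE ?dc_incident ?eqxx ?andbT //.
- by case/and3P => xS inc /eqP xE; rewrite -xE xS.
- by case/and3P => _ _ /eqP.
Qed.

Lemma deg_dcT w c : deg (dc_ends ends) setT (w, c) = deg ends setT w.
Proof. by rewrite deg_dc; apply: eq_card => e; rewrite !inE. Qed.

Definition dc_glue (t : {set E} * ({ffun E -> bool} * {set E})) : {set E * bool} :=
  [set x | if x.1 \in t.1 then t.2.1 x.1 == x.2 else x.1 \in t.2.2].

Definition dc_split (S : {set E * bool}) : {set E} * ({ffun E -> bool} * {set E}) :=
  ([set e | ((e, false) \in S) != ((e, true) \in S)],
   ([ffun e => ((e, false) \notin S) && ((e, true) \in S)],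
    [set e | ((e, false) \in S) && ((e, true) \in S)])).

Lemma dc_splitK : cancel dc_split dc_glue.
Proof.
move=> S; apply/setP => -[e b]; rewrite !inE /= ffunE.
by case: b; case: ((e, false) \in S); case: ((e, true) \in S).
Qed.

Lemma dc_split_sub S : (dc_split S).2.2 \subset ~: (dc_split S).1.
Proof. by apply/subsetP => e; rewrite !inE => /andP [-> ->]. Qed.

Lemma dc_split_orient_out S :
  [forall e, (e \notin (dc_split S).1) ==> ~~ (dc_split S).2.1 e].
Proof.
apply/forallP => e; rewrite !inE ffunE /=.
by case: ((e, false) \in S); case: ((e, true) \in S).
Qed.

Section Glue.
Variables (A : {set E}) (o : {ffun E -> bool}) (T : {set E}).
Hypotheses (sub_TA : T \subset ~: A) (o_out : [forall e, (e \notin A) ==> ~~ o e]).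

Let notin_T e : e \in A -> (e \in T) = false.
Proof. by move=> eA; apply/negP => /(subsetP sub_TA); rewrite inE eA. Qed.

Lemma dc_glueK : dc_split (dc_glue (A, (o, T))) = (A, (o, T)).
Proof.
congr (_, (_, _)).
- by apply/setP => e; rewrite !inE /=; case: (e \in A); rewrite ?eqxx //; case: (o e).
- apply/ffunP => e; rewrite ffunE !inE /=; case: ifP => [_|eA]; first by case: (o e).
  by have /forallP/(_ e) := o_out; rewrite eA andNb => /negbTE ->.
- apply/setP => e; rewrite !inE /=; case: ifP => [/notin_T ->|_]; last exact: andbb.
  by case: (o e).
Qed.

Lemma deg_dc_glue w c :
  deg (dc_ends ends) (dc_glue (A, (o, T))) (w, c) =
  deg ends T w + #|[set e in A | (if c then Defs.head ends o e else Defs.tail ends o e) == w]|.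
Proof.
rewrite deg_dc /deg -(cardsID A) addnC; congr (_ + _); apply: eq_card => e;
  rewrite !inE /dc_lift /=; case eA: (e \in A); rewrite ?andbF //=.
  by rewrite notin_T.
rewrite /Defs.head /Defs.tail; have := ends_loopless e; case: (ends e) => u v /= /negbTE uv.
case: (u =P w) => [?|/eqP/negbTE uw]; case: (v =P w) => [?|/eqP/negbTE vw];
  subst; first by rewrite eqxx in uv.
all: by case: (o e) c => -[]; rewrite /= ?eqxx ?uw ?vw ?uv.
Qed.

Lemma half_graph_dc_glue :
  half_graph (dc_ends ends) setT (dc_glue (A, (o, T))) =
  eulerian_orientation ends A o && half_graph ends (~: A) T.
Proof.
rewrite /half_graph /eulerian_orientation o_out sub_TA subsetT /=.
apply/forallP/andP => [H | [/forallP ht /forallP hT] [w c]].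
  split; apply/forallP => w; have := H (w, false); have := H (w, true);
  rewrite !deg_dc_glue !deg_dcT (deg_setT_setC _ A) (deg_head_tail ends_loopless o A);
  move=> /eqP ? /eqP ?; apply/eqP; lia.
have /eqP := ht w; have /eqP := hT w.
rewrite deg_dc_glue deg_dcT (deg_setT_setC _ A) (deg_head_tail ends_loopless o A).
case: c => /= ? ?; apply/eqP; lia.
Qed.
End Glue.

Lemma n_half_dc :
  n_half (dc_ends ends) setT =
  \sum_(A : {set E}) n_eul_orient ends A * n_half ends (~: A).
Proof.
rewrite /n_eul_orient /n_half sum_mul_card.
apply: (card_in_bij (f := dc_split) (g := dc_glue)) => [S|[A [o T]]|S _|[A [o T]]];
  rewrite ?inE /=.
- rewrite -half_graph_dc_glue ?dc_splitK //; first exact: dc_split_sub.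
  exact: dc_split_orient_out.
- case/andP => /[dup] eo /andP [oA _] /[dup] hT /andP [TA _].
  by rewrite half_graph_dc_glue // eo hT.
- exact: dc_splitK.
- by case/andP => /andP [oA _] /andP [TA _]; rewrite dc_glueK.
Qed.
End DoubleCover.

Theorem theorem1p4 (V E : finType) (ends : E -> V * V) :
  loopless ends -> eulerian_graph ends ->
  n_eul_orient (dc_ends ends) setT = n_half (dc_ends ends) setT /\
  n_half (dc_ends ends) setT =
    \sum_(A : {set E}) n_eul_orient ends A * n_half ends (~: A).
Proof.
move=> ends_loopless _; split; first exact: n_eul_orient_bipartite (@dc_bipartite _ _ ends).
exact: n_half_dc.
Qed.
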